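(* Let $n \ge 1$. Define $F_0(k) = k$ for all $k \ge 1$, and for $1 \le q \le n$ define $F_q$ on $\{1, \ldots, 2^n\}$ inductively by $F_q(1) = 0$ and, for $k \ge 2$, $$F_q(k) = \max_{1 \le k' \le k/2} \bigl( F_q(k') + F_q(k-k') + F_{q-1}(k') \bigr).$$ Then for all $1 \le q \le n$ and $1 \le k \le 2^n$, $$F_q(k) = \sum_{i=0}^{k-1} h_q(i).$$
   Context: For $i \in [0:2^n-1]$, $h(i)$ denotes the number of ones in the binary representation of $i$, and $h_q(i) = \binom{h(i)}{q}$ (so $h_0(i) = 1$ and $\sum_{i=0}^{k-1} h_0(i) = k$). The maximum is over integers $k'$. *)

From mathcomp Require Import all_boot.
Set Implicit Arguments. Unset Strict Implicit. Unset Printing Implicit Defensive.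

(* h i = number of ones in the binary representation of i:
   bit j of i is odd (i %/ 2^j); bits j >= i are 0 since i < 2^i. *)
Definition hw (i : nat) : nat := \sum_(j < i.+1) odd (i %/ 2 ^ j).

Definition hq (q i : nat) : nat := 'C(hw i, q).

From mathcomp Require Import all_boot.
From mathcomp Require Import zify.

Set Implicit Arguments.
Unset Strict Implicit.

(* Write [S_q k = \sum_(i < k) h_q i].  Since [h (2i + b) = h i + b] for a bit [b],
   Pascal's rule gives [S_q (2m) = 2 S_q m + S_(q-1) m] and
   [S_q (2m+1) = S_q (m+1) + S_q m + S_(q-1) m].  From these, strong induction on
   [a + b] with a case split on the parities of [a] and [b] shows
   [S_q a + S_q b + S_(q-1) a <= S_q (a + b)] whenever [a <= b], for all [q] at once.
   So the maximum in the recursion is [S_q k], attained at [k' = k/2], and [F_q = S_q]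
   follows by induction on [q] and [k]. *)

Definition bitcount (N i : nat) : nat := \sum_(0 <= j < N) odd (i %/ 2 ^ j).

Lemma bitcount_widen N M i : i < 2 ^ N -> N <= M -> bitcount M i = bitcount N i.
Proof.
move=> iN NM; rewrite /bitcount (big_cat_nat (n := N) (leq0n N) NM) /=.
rewrite [X in _ + X]big1_seq ?addn0 // => j /andP[_].
rewrite mem_index_iota => /andP[Nj _].
by rewrite divn_small // (leq_trans iN) // leq_exp2l.
Qed.

Lemma ltn_exp2S k : k < 2 ^ k.+1.
Proof. by rewrite expnS; have := ltn_expl k (isT : 1 < 2); lia. Qed.

Lemma hw_bitcount N i : i < 2 ^ N -> hw i = bitcount N i.
Proof.
move=> iN; have iS := ltn_exp2S i.
have -> : hw i = bitcount i.+1 i by rewrite /bitcount big_mkord.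
rewrite -(bitcount_widen (M := maxn N i.+1) iS) ?leq_maxr //.
by rewrite (bitcount_widen (M := maxn N i.+1) iN) ?leq_maxl.
Qed.

Lemma bitcountS N i b : b <= 1 -> bitcount N.+1 (i * 2 + b) = b + bitcount N i.
Proof.
move=> b1; rewrite /bitcount big_nat_recl // expn0 divn1 oddD oddM andbF addFb.
congr (_ + _); first by case: b b1 => [|[|]].
apply: eq_bigr => j _.
by rewrite expnS divnMA divnMDl // (divn_small (m := b)) ?addn0 //; lia.
Qed.

Lemma hw_double_add i b : b <= 1 -> hw (i * 2 + b) = hw i + b.
Proof.
move=> b1; have iN := ltn_exp2S i.
have iN2 : i * 2 + b < 2 ^ i.+2 by rewrite expnS; lia.
by rewrite (hw_bitcount iN) (hw_bitcount iN2) bitcountS // addnC.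
Qed.

Lemma hq_double q i : hq q (i * 2) = hq q i.
Proof. by rewrite /hq -[i * 2]addn0 hw_double_add // addn0. Qed.

Lemma hq_double1 q i : hq q.+1 (i * 2 + 1) = hq q.+1 i + hq q i.
Proof. by rewrite /hq hw_double_add // addn1 binS. Qed.

Definition hsum (q k : nat) : nat := \sum_(0 <= i < k) hq q i.

Definition hsum_prev (q k : nat) : nat := if q is q'.+1 then hsum q' k else 0.

Lemma hsum0 q : hsum q 0 = 0.
Proof. by rewrite /hsum big_geq. Qed.

Lemma hsumS q k : hsum q k.+1 = hsum q k + hq q k.
Proof. by rewrite /hsum big_nat_recr. Qed.

Lemma hsum0k k : hsum 0 k = k.
Proof. by elim: k => [|k IH]; rewrite ?hsum0 // hsumS IH /hq bin0 addn1. Qed.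

Lemma hsum_prev0 q : hsum_prev q 0 = 0.
Proof. by case: q => [|q] //=; rewrite hsum0. Qed.

Lemma hsum_double q m : hsum q (m * 2) = hsum q m + hsum q m + hsum_prev q m.
Proof.
elim: m => [|m IH]; first by rewrite !hsum0 hsum_prev0.
have -> : m.+1 * 2 = (m * 2 + 1).+1 by lia.
rewrite hsumS addn1 hsumS hq_double IH hsumS -addn1.
case: q IH => [|q] _ /=; first by rewrite /hq !bin0; lia.
by rewrite hq_double1 hsumS; lia.
Qed.

Lemma hsum_double1 q m :
  hsum q (m * 2 + 1) = hsum q m.+1 + hsum q m + hsum_prev q m.
Proof. by rewrite addn1 hsumS hsum_double hq_double hsumS; lia. Qed.

Lemma hsum_prev_double q m :
  hsum_prev q (m * 2) = hsum_prev q m + hsum_prev q m + hsum_prev q.-1 m.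
Proof. by case: q => [|q] //=; rewrite hsum_double. Qed.

Lemma hsum_prev_double1 q m :
  hsum_prev q (m * 2 + 1) = hsum_prev q m.+1 + hsum_prev q m + hsum_prev q.-1 m.
Proof. by case: q => [|q] //=; rewrite hsum_double1. Qed.

Lemma hsum_prev_mono q : {homo hsum_prev q : k l / k <= l}.
Proof.
move=> k l kl; case: q => [|q] //=; rewrite /hsum (big_cat_nat (leq0n k) kl) /=.
exact: leq_addr.
Qed.

Lemma hsum_superadd q a b :
  a <= b -> hsum q a + hsum q b + hsum_prev q a <= hsum q (a + b).
Proof.
move: {2}(a + b) (leqnn (a + b)) => N; elim: N q a b => [|N IH] q a b.
  move=> ab0 _; have -> : a = 0 by lia.
  by rewrite hsum0 hsum_prev0 add0n addn0.
move=> abN ab.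
have IHprev c d : c + d <= N -> c <= d ->
    hsum_prev q c + hsum_prev q d + hsum_prev q.-1 c <= hsum_prev q (c + d).
  by case: q => [|q'] //= *; apply: IH.
have [->|a0] := posnP a; first by rewrite hsum0 hsum_prev0 add0n addn0.
rewrite -(odd_double_half a) -(odd_double_half b) -!muln2 ![odd _ + _]addnC.
rewrite -(odd_double_half a) -(odd_double_half b) -!muln2 in abN ab a0.
move: a./2 b./2 abN ab a0 => c d.
case: (odd a); case: (odd b) => /= abN ab a0.
- have [cd|dc] := ltnP c d; last first.
    have -> : c = d by lia.
    have -> : d * 2 + 1 + (d * 2 + 1) = (d * 2 + 1) * 2 by lia.
    by rewrite hsum_double.
  have -> : c * 2 + 1 + (d * 2 + 1) = (c + d).+1 * 2 by lia.
  rewrite !hsum_double1 hsum_double hsum_prev_double1.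
  have := IH q c d.+1 ltac:(lia) ltac:(lia); have := IH q c.+1 d ltac:(lia) ltac:(lia).
  have := IHprev c d ltac:(lia) ltac:(lia).
  have := hsum_prev_mono q (leqnSn (c + d)); rewrite addnS addSn; lia.
- have -> : c * 2 + 1 + (d * 2 + 0) = (c + d) * 2 + 1 by lia.
  rewrite !hsum_double1 !addn0 !hsum_double hsum_prev_double1.
  have := IH q c.+1 d ltac:(lia) ltac:(lia); have := IH q c d ltac:(lia) ltac:(lia).
  have := IHprev c d ltac:(lia) ltac:(lia); rewrite addSn; lia.
- have -> : c * 2 + 0 + (d * 2 + 1) = (c + d) * 2 + 1 by lia.
  rewrite !hsum_double1 !addn0 !hsum_double hsum_prev_double.
  have := IH q c d.+1 ltac:(lia) ltac:(lia); have := IH q c d ltac:(lia) ltac:(lia).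
  have := IHprev c d ltac:(lia) ltac:(lia); rewrite addnS; lia.
- have -> : c * 2 + 0 + (d * 2 + 0) = (c + d) * 2 by lia.
  rewrite !addn0 !hsum_double hsum_prev_double.
  have := IH q c d ltac:(lia) ltac:(lia); have := IHprev c d ltac:(lia) ltac:(lia); lia.
Qed.

Lemma bigmax_hsum q k : 2 <= k ->
  \max_(1 <= k' < k./2.+1) (hsum q k' + hsum q (k - k') + hsum_prev q k') = hsum q k.
Proof.
move=> k2; have hk := odd_double_half k; rewrite -muln2 in hk.
apply/eqP; rewrite eqn_leq; apply/andP; split.
  apply/bigmax_leqP_seq => i; rewrite mem_index_iota => /andP[i1 i2] _.
  by have := hsum_superadd q (_ : i <= k - i); rewrite subnKC; lia.
apply: (bigmaxn_sup_seq k./2); rewrite ?mem_index_iota //; first lia.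
move: hk; case: (odd k) => /= hk.
  rewrite (_ : k - k./2 = k./2.+1); last lia.
  by rewrite -{1}hk addnC hsum_double1; lia.
rewrite (_ : k - k./2 = k./2); last lia.
by rewrite -{1}hk add0n hsum_double.
Qed.

Theorem lemma3 (n : nat) (F : nat -> nat -> nat) :
  1 <= n ->
  (forall k, 1 <= k -> F 0 k = k) ->
  (forall q, 1 <= q <= n -> F q 1 = 0) ->
  (forall q k, 1 <= q <= n -> 2 <= k <= 2 ^ n ->
     F q k = \max_(1 <= k' < k./2.+1) (F q k' + F q (k - k') + F q.-1 k')) ->
  forall q k, 1 <= q <= n -> 1 <= k <= 2 ^ n ->
    F q k = \sum_(0 <= i < k) hq q i.
Proof.
move=> _ F0 F1 Frec; elim=> [//|q IHq] k qn; rewrite -/(hsum q.+1 k).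
have Fprev i : 1 <= i <= 2 ^ n -> F q i = hsum_prev q.+1 i.
  case: q IHq qn {Frec} => [_ _ /andP[i1 _]|q IHq qn ibd]; first by rewrite F0 //= hsum0k.
  by rewrite IHq //; lia.
elim/ltn_ind: k => k IHk kn.
have [k1|k2] := leqP k 1.
  have -> : k = 1 by lia.
  by rewrite F1 // hsumS hsum0 /hq /hw big_ord1.
rewrite Frec //; last lia.
rewrite -bigmax_hsum //; apply: eq_big_nat => i /andP[i1 i2].
have hk := odd_double_half k; rewrite -muln2 in hk.
by rewrite !IHk ?Fprev //; lia.
Qed.
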